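(* Let $Q_x$ be a full-dimensional rational polytope in $\mathbb{R}^m$, $m\ge2$; let $H^1\subseteq\mathbb{R}^m$ be a hyperplane with $Q_x^1:=H^1\cap Q_x\neq\emptyset$; let $H\neq H^1$ be a hyperplane supporting a nonempty face of $Q_x^1$, and let $\bar H$ be the closed half-space bounded by $H$ not containing $Q_x^1$. Then for every point $\bar x$ in the relative interior of $\bar H\cap H^1$, $$d(\bar x,Q_x)\ge d(\bar x,H\cap H^1)\cdot\sin\theta(Q_x,H^1,\bar H).$$
   Context: Such a $(Q_x,H^1,\bar H)$ is called a triplet. $\theta(Q_x,H^1,\bar H)$ denotes the maximum, over all hyperplanes $H^*\subseteq\mathbb{R}^m$ with $H^*\cap H^1=H\cap H^1$ that separate $\mathrm{int}(Q_x)$ from $\bar H\cap H^1$, of the angle (in $[0,\pi/2]$) between $H^1$ and $H^*$; such hyperplanes exist and the maximum is attained. $d$ denotes Euclidean distance, with $d(x,S)=\inf_{y\in S}d(x,y)$. *)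

From HB Require Import structures.
From mathcomp Require Import all_boot all_order all_algebra.
From mathcomp Require Import all_classical all_reals all_analysis.
Set Implicit Arguments. Unset Strict Implicit. Unset Printing Implicit Defensive.
Import Order.TTheory GRing.Theory Num.Theory.
Local Open Scope classical_set_scope.
Local Open Scope ring_scope.

Section Geom.
Variables (R : realType) (m : nat).
Implicit Types (u v x y : 'rV[R]_m) (S : set 'rV[R]_m).

Definition dot u v : R := \sum_(i < m) u ord0 i * v ord0 i.
Definition enorm u : R := Num.sqrt (dot u u).
Definition edist x y : R := enorm (x - y).

Definition dist_set x S : R := inf [set edist x y | y in S].

Definition eball x (e : R) : set 'rV[R]_m := [set y | edist x y < e].

Definition einterior S : set 'rV[R]_m :=
  [set x | exists2 e : R, 0 < e & eball x e `<=` S].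

Definition affine_hull S : set 'rV[R]_m :=
  [set x | exists n (p : 'I_n -> 'rV[R]_m) (l : 'I_n -> R),
     (forall i, S (p i)) /\ \sum_(i < n) l i = 1 /\ x = \sum_(i < n) l i *: p i].

Definition conv_hull S : set 'rV[R]_m :=
  [set x | exists n (p : 'I_n -> 'rV[R]_m) (l : 'I_n -> R),
     (forall i, S (p i)) /\ (forall i, 0 <= l i) /\
     \sum_(i < n) l i = 1 /\ x = \sum_(i < n) l i *: p i].

Definition relint S : set 'rV[R]_m :=
  [set x | S x /\ exists2 e : R, 0 < e & eball x e `&` affine_hull S `<=` S].

Definition rational_point x := forall i, exists q : rat, x ord0 i = ratr q.

Definition rational_polytope S :=
  exists n (p : 'I_n -> 'rV[R]_m),
    (forall i, rational_point (p i)) /\ S = conv_hull [set p i | i in [set: 'I_n]].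

(* hyperplane {y | a.y = b}, a <> 0 *)
Definition hyperplane a (b : R) : set 'rV[R]_m := [set y | dot a y = b].

Definition separates (A B : set 'rV[R]_m) c (e : R) :=
  (A `<=` [set y | dot c y <= e] /\ B `<=` [set y | e <= dot c y]) \/
  (A `<=` [set y | e <= dot c y] /\ B `<=` [set y | dot c y <= e]).

(* angle in [0, pi/2] between hyperplanes with normals u, v *)
Definition hp_angle u v : R := acos (`|dot u v| / (enorm u * enorm v)).

(* theta(Q, H^1, Hbar), H^1 = {a1.y = b1}, H = {a.y = b}, Hbar = {b <= a.y} :
   maximum over hyperplanes H* with H* /\ H^1 = H /\ H^1 separating int Q
   from Hbar /\ H^1 of the angle between H^1 and H* *)
Definition theta S a1 (b1 : R) a (b : R) : R :=
  sup [set t | exists c (e : R), c != 0 /\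
     hyperplane c e `&` hyperplane a1 b1 = hyperplane a b `&` hyperplane a1 b1 /\
     separates (einterior S) ([set y | b <= dot a y] `&` hyperplane a1 b1) c e /\
     t = hp_angle a1 c].

End Geom.

From Pilot Require Import Defs.
From HB Require Import structures.
From mathcomp Require Import all_boot all_order all_algebra.
From mathcomp Require Import all_classical all_reals all_analysis.
From mathcomp Require Import ring lra.
Import Order.TTheory GRing.Theory Num.Theory numFieldNormedType.Exports.
Local Open Scope classical_set_scope.
Local Open Scope ring_scope.

(* Let H* = {c.y = e} be a hyperplane admissible in the definition of theta,
   oriented so that int Q lies in {c.y <= e} and xbar in {e <= c.y}.  Since
   int Q is nonempty, Q itself lies in {c.y <= e}, so d(xbar, Q) is at least
   the distance (c.xbar - e)/|c| from xbar to H*.  Inside H^1 = {a1.y = b1},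
   moving from xbar along the component c' of c orthogonal to a1 reaches
   H* /\ H^1 = H /\ H^1 after a distance (c.xbar - e)/|c'|, and
   |c'| = |c| sin phi, where phi is the angle between H^1 and H*.  Hence
   d(xbar, H /\ H^1) sin phi <= d(xbar, Q) for every admissible H*, and by
   continuity of sin also for the supremum theta of these angles. *)

Section Euclidean.
Local Set Implicit Arguments.
Local Unset Strict Implicit.
Variables (R : realType) (m : nat).
Implicit Types (a c u v w x y : 'rV[R]_m) (e k : R).

Lemma dotC u v : dot u v = dot v u.
Proof. by apply: eq_bigr => i _; rewrite mulrC. Qed.

Lemma dotDr u v w : dot u (v + w) = dot u v + dot u w.
Proof. by rewrite /dot -big_split; apply: eq_bigr => i _; rewrite mxE mulrDr. Qed.

Lemma dotZr u k v : dot u (k *: v) = k * dot u v.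
Proof. by rewrite /dot mulr_sumr; apply: eq_bigr => i _; rewrite mxE mulrCA. Qed.

Lemma dotNr u v : dot u (- v) = - dot u v.
Proof. by rewrite -scaleN1r dotZr mulN1r. Qed.

Lemma dotBr u v w : dot u (v - w) = dot u v - dot u w.
Proof. by rewrite dotDr dotNr. Qed.

Lemma dotZl u k v : dot (k *: v) u = k * dot v u.
Proof. by rewrite dotC dotZr dotC. Qed.

Lemma dotNl u v : dot (- v) u = - dot v u.
Proof. by rewrite dotC dotNr dotC. Qed.

Lemma dotBl u v w : dot (v - w) u = dot v u - dot w u.
Proof. by rewrite dotC dotBr !(dotC u). Qed.

Lemma dot0r u : dot u 0 = 0.
Proof. by rewrite -(scale0r 0) dotZr mul0r. Qed.

Lemma dot_sumr u n (F : 'I_n -> 'rV[R]_m) :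
  dot u (\sum_(i < n) F i) = \sum_(i < n) dot u (F i).
Proof. exact: (big_morph (dot u) (dotDr u) (dot0r u)). Qed.

Lemma dot_ge0 u : 0 <= dot u u.
Proof. by apply: sumr_ge0 => i _; rewrite -expr2 sqr_ge0. Qed.

Lemma dot_gt0 u : u != 0 -> 0 < dot u u.
Proof.
apply: contraR; rewrite -leNgt => uu_le0.
have /eqP : dot u u = 0 by apply/le_anti; rewrite uu_le0 dot_ge0.
rewrite psumr_eq0 => [/allP u0|i _]; last by rewrite -expr2 sqr_ge0.
apply/eqP/rowP => i; rewrite mxE.
by have /implyP/(_ isT) := u0 i (mem_index_enum _); rewrite mulf_eq0 orbb => /eqP.
Qed.

Lemma enorm_ge0 u : 0 <= enorm u.
Proof. exact: sqrtr_ge0. Qed.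

Lemma enorm_gt0 u : u != 0 -> 0 < enorm u.
Proof. by move=> u0; rewrite sqrtr_gt0 dot_gt0. Qed.

Lemma sqr_enorm u : enorm u ^+ 2 = dot u u.
Proof. by rewrite sqr_sqrtr // dot_ge0. Qed.

Lemma enormZ k u : enorm (k *: u) = `|k| * enorm u.
Proof. by rewrite /enorm dotZl dotZr mulrA -expr2 sqrtrM ?sqr_ge0 // sqrtr_sqr. Qed.

Lemma enormN u : enorm (- u) = enorm u.
Proof. by rewrite -scaleN1r enormZ normrN normr1 mul1r. Qed.

Lemma sqr_dot_le u v : dot u v ^+ 2 <= dot u u * dot v v.
Proof.
have [->|v0] := eqVneq v 0; first by rewrite !dot0r expr0n mulr0.
have vv0 := dot_gt0 v0; set k := dot u v / dot v v.
(* [k v] is the orthogonal projection of [u] on [v] *)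
rewrite -subr_ge0; suff -> : dot u u * dot v v - dot u v ^+ 2 =
    dot (u - k *: v) (u - k *: v) * dot v v.
  exact: mulr_ge0 (dot_ge0 _) (ltW vv0).
by rewrite dotBl !dotBr !dotZl !dotZr (dotC v u) /k; field; rewrite gt_eqF.
Qed.

Lemma ler_abs_dot u v : `|dot u v| <= enorm u * enorm v.
Proof.
rewrite -ler_sqr ?nnegrE ?mulr_ge0 ?enorm_ge0 //.
by rewrite real_normK ?num_real // exprMn !sqr_enorm sqr_dot_le.
Qed.

Lemma hyperplaneN c e : hyperplane (- c) (- e) = hyperplane c e.
Proof.
apply/funext => y; rewrite /hyperplane /= dotNl.
by apply/propext; split=> [/oppr_inj|->].
Qed.

Definition orth_comp a c := c - (dot a c / dot a a) *: a.

Lemma dot_orth_comp a c : a != 0 -> dot a (orth_comp a c) = 0.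
Proof. by move=> a0; rewrite dotBr dotZr mulfVK ?subrr ?gt_eqF ?dot_gt0. Qed.

Lemma dot_orth_comp_l a c : a != 0 ->
  dot c (orth_comp a c) = dot (orth_comp a c) (orth_comp a c).
Proof.
by move=> a0; rewrite {2}/orth_comp dotBl dotZl dot_orth_comp // mulr0 subr0.
Qed.

Lemma hp_angle_cos_itv a c : -1 <= `|dot a c| / (enorm a * enorm c) <= 1.
Proof.
have ge0 : 0 <= `|dot a c| / (enorm a * enorm c).
  by rewrite divr_ge0 ?mulr_ge0 ?enorm_ge0.
rewrite (le_trans _ ge0) ?lerN10 //=.
have [->|ac0] := eqVneq (enorm a * enorm c) 0; first by rewrite invr0 mulr0 ler01.
rewrite ler_pdivrMr ?mul1r ?ler_abs_dot // lt_def ac0 mulr_ge0 ?enorm_ge0 //.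
Qed.

Lemma hp_angle_le_pi a c : hp_angle a c <= pi.
Proof. exact/acos_lepi/hp_angle_cos_itv. Qed.

Lemma hp_angleN a c : hp_angle a (- c) = hp_angle a c.
Proof. by rewrite /hp_angle dotNr normrN enormN. Qed.

Lemma enorm_orth_comp a c : a != 0 -> c != 0 ->
  enorm (orth_comp a c) = sin (hp_angle a c) * enorm c.
Proof.
move=> a0 c0; have aa0 := dot_gt0 a0; have cc0 := dot_gt0 c0.
rewrite /hp_angle sin_acos ?hp_angle_cos_itv //.
set al := `|dot a c| / _.
have al0 : 0 <= al by rewrite divr_ge0 ?mulr_ge0 ?enorm_ge0.
have /andP[_ al1] := hp_angle_cos_itv a c.
apply/eqP; rewrite -(@eqrXn2 _ 2) ?mulr_ge0 ?sqrtr_ge0 ?enorm_ge0 //.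
rewrite exprMn !sqr_enorm sqr_sqrtr ?subr_ge0 ?expr_le1 //.
rewrite /al expr_div_n exprMn !sqr_enorm real_normK ?num_real //.
rewrite /orth_comp !(dotBl, dotBr, dotZl, dotZr) (dotC c a).
by apply/eqP; field; rewrite !gt_eqF.
Qed.

End Euclidean.

Section Distance.
Local Set Implicit Arguments.
Local Unset Strict Implicit.
Variables (R : realType) (m : nat).
Implicit Types (a c x y : 'rV[R]_m) (S L : set 'rV[R]_m) (b e r : R).

Lemma dist_set_ge0 x S : 0 <= dist_set x S.
Proof.
have [->|/set0P[y Sy]] := eqVneq S set0; first by rewrite /dist_set image_set0 inf0.
apply: lb_le_inf; first by exists (Defs.edist x y), y.
by move=> _ [z _ <-]; exact: enorm_ge0.
Qed.

Lemma dist_set_le x S y : S y -> dist_set x S <= Defs.edist x y.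
Proof.
move=> Sy; apply: ge_inf; last by exists y.
by exists 0 => _ [z _ <-]; exact: enorm_ge0.
Qed.

Lemma dist_set_ge x S r : S !=set0 -> (forall y, S y -> r <= Defs.edist x y) ->
  r <= dist_set x S.
Proof.
move=> [y Sy] rS; apply: lb_le_inf => [|_ [z Sz <-]]; last exact: rS.
by exists (Defs.edist x y), y.
Qed.

Lemma halfspace_dist_le S x c e : c != 0 -> S !=set0 ->
  S `<=` [set y | dot c y <= e] -> (dot c x - e) / enorm c <= dist_set x S.
Proof.
move=> c0 Sne Sc; apply: dist_set_ge => // y Sy.
rewrite ler_pdivrMr ?enorm_gt0 // mulrC.
apply: le_trans (le_trans (ler_norm _) (ler_abs_dot c (x - y))).
by rewrite dotBr lerD2l lerN2; exact: Sc.
Qed.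

Lemma dist_meet_le a b c e x L : a != 0 -> dot a x = b ->
  hyperplane c e `&` hyperplane a b `<=` L ->
  dist_set x L * enorm (orth_comp a c) <= `|dot c x - e|.
Proof.
move=> a0 xa HL; set n := orth_comp a c.
have [->|n0] := eqVneq n 0; first by rewrite /enorm dot0r sqrtr0 mulr0.
have nn0 : dot n n != 0 by rewrite gt_eqF ?dot_gt0.
(* the foot of the perpendicular from [x] to [hyperplane c e]
   inside [hyperplane a b] *)
set y := x - ((dot c x - e) / dot n n) *: n.
have Ly : L y.
  apply: HL; split; rewrite /hyperplane /= /y dotBr dotZr.
    by rewrite dot_orth_comp_l // mulfVK //; ring.
  by rewrite dot_orth_comp // mulr0 subr0.
apply: le_trans (ler_wpM2r (enorm_ge0 n) (dist_set_le x Ly)) _.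
rewrite /Defs.edist /y opprB addrC subrK enormZ normf_div.
rewrite (ger0_norm (dot_ge0 n)).
by rewrite -sqr_enorm -mulrA -expr2 divfK // sqrf_eq0 gt_eqF ?enorm_gt0.
Qed.

Lemma dist_meet_mul_sin_le a b c e x S L : a != 0 -> c != 0 ->
  dot a x = b -> e <= dot c x ->
  S !=set0 -> S `<=` [set y | dot c y <= e] ->
  hyperplane c e `&` hyperplane a b `<=` L ->
  dist_set x L * sin (hp_angle a c) <= dist_set x S.
Proof.
move=> a0 c0 xa ex Sne Sc HL; apply: le_trans (halfspace_dist_le x c0 Sne Sc).
rewrite ler_pdivlMr ?enorm_gt0 // -mulrA -enorm_orth_comp //.
apply: le_trans (dist_meet_le a0 xa HL) _.
by rewrite ger0_norm ?subr_ge0.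
Qed.

End Distance.

Section ConvexHull.
Local Set Implicit Arguments.
Local Unset Strict Implicit.
Variables (R : realType) (m : nat).
Implicit Types (c u w z : 'rV[R]_m) (S : set 'rV[R]_m) (e t : R).

Lemma conv_hull_segment S u w t : S u -> conv_hull S w -> 0 <= t <= 1 ->
  conv_hull S ((1 - t) *: u + t *: w).
Proof.
move=> Su [n [p [l [Sp [l0 [l1 ->]]]]]] /andP[t0 t1].
exists n.+1, (fun k => if unlift ord0 k is Some k' then p k' else u),
  (fun k => if unlift ord0 k is Some k' then t * l k' else 1 - t).
split; first by move=> k; case: unlift.
split; first by move=> k; case: unlift => [k'|]; rewrite ?mulr_ge0 ?subr_ge0.
rewrite !big_ord_recl /= !unlift_none; split.
  by under eq_bigr do rewrite liftK; rewrite -mulr_sumr l1 mulr1 subrK.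
by under [in RHS]eq_bigr do rewrite liftK -scalerA; rewrite scaler_sumr.
Qed.

Lemma einterior_conv_hull_segment S u z t : S u ->
  einterior (conv_hull S) z -> 0 < t <= 1 ->
  einterior (conv_hull S) ((1 - t) *: u + t *: z).
Proof.
move=> Su [r r0 zr] /andP[t0 t1]; exists (t * r); first exact: mulr_gt0.
move=> y yr; set v := (1 - t) *: u + t *: z.
(* [y] is the image under the homothety of centre [u] and ratio [t]
   of a point of [eball z r] *)
have -> : y = (1 - t) *: u + t *: (z + t^-1 *: (y - v)).
  by rewrite scalerDr scalerA mulfV ?gt_eqF // scale1r addrA subrKC.
apply: conv_hull_segment => //; last by rewrite t1 ltW.
apply: zr; rewrite /eball /= /Defs.edist opprD addNKr enormN enormZ.
by rewrite gtr0_norm ?invr_gt0 // -opprB enormN ltr_pdivrMl // mulrC.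
Qed.

Lemma conv_hull_sub_halfspace S c e : S `<=` [set y | dot c y <= e] ->
  conv_hull S `<=` [set y | dot c y <= e].
Proof.
move=> Sc _ [n [p [l [Sp [l0 [l1 ->]]]]]] /=.
rewrite dot_sumr -[e]mul1r -l1 mulr_suml.
by apply: ler_sum => i _; rewrite dotZr ler_wpM2l // Sc.
Qed.

Lemma le_of_forall_segment (x k e : R) :
  (forall t, 0 < t <= 1 -> x + t * k <= e) -> x <= e.
Proof.
move=> xke; rewrite leNgt; apply/negP => ex.
set d := x - e; have d0 : 0 < d by rewrite subr_gt0.
have kd0 : 0 < `|k| + d by rewrite ltr_wpDl.
(* [t (|k| + d) = d] gives [x + t k >= x - t |k| = e + t d > e] *)
set t := d / (`|k| + d).
have t0 : 0 < t by rewrite divr_gt0.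
have t1 : t <= 1 by rewrite ler_pdivrMr // mul1r lerDr.
have := xke _ (introT andP (conj t0 t1)).
have : 0 <= t * (k + `|k|).
  by apply: mulr_ge0; [exact: ltW | rewrite -lerBlDr sub0r; exact: lerNnormlW].
have : t * (`|k| + d) = d by rewrite divfK ?gt_eqF.
have : 0 < t * d by rewrite mulr_gt0.
rewrite /d; lra.
Qed.

Lemma conv_hull_sub_halfspace_einterior S c e :
  einterior (conv_hull S) !=set0 ->
  einterior (conv_hull S) `<=` [set y | dot c y <= e] ->
  conv_hull S `<=` [set y | dot c y <= e].
Proof.
move=> [z zi] int_c; apply: conv_hull_sub_halfspace => u Su /=.
apply: (@le_of_forall_segment _ (dot c z - dot c u)) => t t01.
have := int_c _ (einterior_conv_hull_segment Su zi t01); rewrite /= dotDr !dotZr.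
by congr (_ <= _); ring.
Qed.

End ConvexHull.

(* [sup set0 = 0], hence the hypothesis [P 0]. *)
Lemma sup_in_closed (R : realType) (A P : set R) :
  closed P -> has_ubound A -> A `<=` P -> P 0 -> P (sup A).
Proof.
move=> Pcl ubA AP P0; have [->|/set0P A0] := eqVneq A set0; first by rewrite sup0.
by move/closure_id: Pcl => ->; exact: closureS AP _ (closure_sup A0 ubA).
Qed.

Lemma closed_mul_sin_le (R : realType) (D d : R) :
  closed [set t : R | D * sin t <= d].
Proof.
rewrite -[X in closed X]/((fun t => D * sin t) @^-1` [set s | s <= d]).
apply: (@preimage_closed R R) => [t _|]; last exact: closed_le.
apply: (@continuousM _ _ (fun=> D) sin).
  exact: cst_continuous.
exact: continuous_sin.
Qed.

Theorem lemma3 (R : realType) (m : nat) (hm : (2 <= m)%N)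
  (Q : set 'rV[R]_m) (hQ : rational_polytope Q) (hfull : einterior Q !=set0)
  (a1 : 'rV[R]_m) (b1 : R) (ha1 : a1 != 0)
  (hQ1 : (Q `&` hyperplane a1 b1) !=set0)
  (a : 'rV[R]_m) (b : R) (ha : a != 0)
  (hHH1 : hyperplane a b <> hyperplane a1 b1)
  (hsupp : Q `&` hyperplane a1 b1 `<=` [set y | dot a y <= b])
  (hface : (Q `&` hyperplane a1 b1 `&` hyperplane a b) !=set0)
  (hHbar : ~ (Q `&` hyperplane a1 b1 `<=` [set y | b <= dot a y]))
  (xbar : 'rV[R]_m)
  (hx : relint ([set y | b <= dot a y] `&` hyperplane a1 b1) xbar) :
  dist_set xbar (hyperplane a b `&` hyperplane a1 b1) * sin (theta Q a1 b1 a b)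
    <= dist_set xbar Q.
Proof.
have [n [p [_ QE]]] := hQ.
have [xHbar _] := hx; have [_ xH1] := xHbar.
have Qne : Q !=set0 by case: hQ1 => y [Qy _]; exists y.
set L := hyperplane a b `&` hyperplane a1 b1.
have oriented c e : c != 0 -> hyperplane c e `&` hyperplane a1 b1 = L ->
    einterior Q `<=` [set y | dot c y <= e] ->
    [set y | b <= dot a y] `&` hyperplane a1 b1 `<=` [set y | e <= dot c y] ->
    dist_set xbar L * sin (hp_angle a1 c) <= dist_set xbar Q.
  move=> c0 HE int_c Hbar_c.
  apply: dist_meet_mul_sin_le ha1 c0 xH1 (Hbar_c _ xHbar) Qne _ _; last by rewrite HE.
  by rewrite QE; apply: conv_hull_sub_halfspace_einterior; rewrite -QE.
rewrite /theta; apply: (@sup_in_closed R _ [set t | _ * sin t <= _]).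
- exact: closed_mul_sin_le.
- by exists pi => _ [c [e [_ [_ [_ ->]]]]]; exact: hp_angle_le_pi.
- move=> _ [c [e [c0 [HE [[[int_c Hbar_c]|[int_c Hbar_c]] ->]]]]] /=.
    exact: oriented c e c0 HE int_c Hbar_c.
  rewrite -hp_angleN; apply: (oriented (- c) (- e)); rewrite ?oppr_eq0 ?hyperplaneN //.
    by move=> y /int_c; rewrite /= dotNl lerN2.
  by move=> y /Hbar_c; rewrite /= dotNl lerN2.
- by rewrite /= sin0 mulr0 dist_set_ge0.
Qed.
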